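(* Let $A$ be a $[5,1]$ stabilizer tensor and $n,d\ge1$. For any $x\in\mathcal{P}_n$, $x\in S_L(A,n,d)$ if and only if $x$ commutes with every element of $\mathcal{Z}_L(A,n,d)$.
   Context: Pauli operators are considered modulo phases; $\mathcal{P}_n$ denotes the $n$-qubit Pauli group modulo phases. A $[5,1]$ stabilizer tensor is a tensor $A^{s}_{udlr}$ with all indices in $\{0,1\}$ such that the 5-qubit vector $\sum A^{s}_{udlr}|s,u,d,l,r\rangle$ is a stabilizer state; $s$ is the physical leg and $u,d,l,r$ are the virtual legs. Cylindrical stabilizer PEPS: place a copy of $A$ at every site $(i,j)$, $i\in\mathbb{Z}_n$, $j=1,\dots,d$. Contract the up leg of $(i,j)$ with the down leg of $(i+1,j)$ (indices mod $n$), and the right leg of $(i,j)$ with the left leg of $(i,j+1)$ for $j<d$; contract every physical leg with $|+\rangle$. The result is a stabilizer state on the $n$ left legs of column 1 (register $L$) and $n$ right legs of column $d$ (register $R$); $S(A,n,d)$ is its stabilizer group (mod phases). $S_L(A,n,d)\subseteq\mathcal{P}_n$ is the restriction of $S(A,n,d)$ to $L$ (the group of $L$-parts of its elements) and $\mathcal{Z}_L(A,n,d)$ is the center of $S_L(A,n,d)$. *)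

From HB Require Import structures.
From mathcomp Require Import all_boot all_order all_algebra.
From mathcomp Require Import algC.
Set Implicit Arguments. Unset Strict Implicit. Unset Printing Implicit Defensive.
Import Order.TTheory GRing.Theory Num.Theory.
Local Open Scope ring_scope.

Definition bits (m : nat) := {ffun 'I_m -> bool}.

Definition state (m : nat) := bits m -> algC.

(** n-qubit Pauli operators modulo phases, in the standard symplectic
    representation: (a, b) stands for X^a Z^b = (X^a_1 Z^b_1) (x) ... *)
Definition pauli (m : nat) := (bits m * bits m)%type.

Definition xorb_bits m (s t : bits m) : bits m := [ffun i => s i (+) t i].

Definition dotb m (s t : bits m) : bool := \big[addb/false]_(i < m) (s i && t i).

(** Two Paulis anticommute iff their symplectic product is 1. *)
Definition symp m (p q : pauli m) : bool := dotb p.1 q.2 (+) dotb p.2 q.1.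
Definition pcommute m (p q : pauli m) : bool := ~~ symp p q.

Definition pauli_act m (p : pauli m) (psi : state m) : state m :=
  fun t => let t' := xorb_bits t p.1 in
           (if dotb p.2 t' then -1 else 1) * psi t'.

Definition stabb m (psi : state m) (p : pauli m) : bool :=
  [exists k : 'I_4, [forall t, 'i ^+ k * pauli_act p psi t == psi t]].

Definition stab_group m (psi : state m) : {set pauli m} := [set p | stabb psi p].

Definition is_stabilizer_state m (psi : state m) : bool :=
  [exists t, psi t != 0] && (#|stab_group psi| == 2 ^ m)%N.

(** A [5,1] tensor A^s_{udlr}, given as A s u d l r. *)
Definition tensor := bool -> bool -> bool -> bool -> bool -> algC.

Definition tensor_vec (A : tensor) : state 5 :=
  fun t => A (t (inord 0)) (t (inord 1)) (t (inord 2)) (t (inord 3)) (t (inord 4)).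

Definition is_stabilizer_tensor (A : tensor) : bool :=
  is_stabilizer_state (tensor_vec A).

(** Sites (i,j), i : 'I_n (cyclic), j : 'I_d (0-based
    columns).  Vertical bond variable w (i,j) = down leg of (i,j) = up leg of
    (i-1,j); so the up leg of (i,j) is w (i+1,j) (indices mod n).  Horizontal variables h (i,k), k : 'I_(d+1):
    site (i,j) has left leg h (i,j) and right leg h (i,j+1); h (i,0) is the
    open left leg of row i (register L) and h (i,d) the open right leg
    (register R).  Physical legs are contracted with |+>, i.e. summed over
    (the overall nonzero factor 2^(-nd/2) is dropped; it does not affect
    the stabilizer group). The output register is 'I_(n+n): L first, then R. *)
Definition ordS' n (i : 'I_n) : 'I_n :=
  match n return 'I_n -> 'I_n with 0 => fun i => i | n'.+1 => fun i => ordS i end i.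

Definition peps_state (A : tensor) (n d : nat) : state (n + n) :=
  fun t =>
  \sum_(w : {ffun 'I_n * 'I_d -> bool})
  \sum_(h : {ffun 'I_n * 'I_d.+1 -> bool} |
          [forall i, (h (i, ord0) == t (lshift n i))
                     && (h (i, ord_max) == t (rshift n i))])
  \sum_(s : {ffun 'I_n * 'I_d -> bool})
  \prod_(ij : 'I_n * 'I_d)
     let i := ij.1 in let j := ij.2 in
     A (s ij) (w (ordS' i, j)) (w ij)
       (h (i, widen_ord (leqnSn d) j)) (h (i, lift ord0 j)).
Arguments peps_state : clear implicits.

Definition S_AND (A : tensor) (n d : nat) : {set pauli (n + n)} :=
  stab_group (peps_state A n d).

Definition restrL n (p : pauli (n + n)) : pauli n :=
  ([ffun i => p.1 (lshift n i)], [ffun i => p.2 (lshift n i)]).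

Definition S_L (A : tensor) (n d : nat) : {set pauli n} :=
  [set restrL p | p in S_AND A n d].

Definition Z_L (A : tensor) (n d : nat) : {set pauli n} :=
  [set y in S_L A n d | [forall z in S_L A n d, pcommute y z]].

From mathcomp Require Import all_boot all_order all_algebra algC.
From mathcomp Require Import ring.
Set Implicit Arguments. Unset Strict Implicit. Unset Printing Implicit Defensive.
Import Order.TTheory GRing.Theory Num.Theory.

(* Paulis modulo phases form a symplectic F_2-space in which commuting means
   being orthogonal.  A coisotropic subspace W (perp W \subset W) is the
   commutant of its center, and restricting Paulis to a subset of the qubits
   preserves coisotropy; so it suffices to show that the stabilizer group S of
   the PEPS state is coisotropic.  The Paulis on all legs whose restriction to
   every site stabilizes A form a Lagrangian subspace P.  Let D be the group
   generated by X on physical legs and by XX and ZZ on bonds.  Inside the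
   tensor network sum, an element of P commuting with D only permutes the
   summation variables, so the restrictions T of these elements to the open
   legs lie in S; and T is coisotropic, being the restriction of the
   coisotropic space (P :&: perp D) + D.  Hence
   perp S \subset perp T \subset T \subset S. *)

Section Symplectic.
Variable I : finType.

Definition pauli_on := ({ffun I -> bool} * {ffun I -> bool})%type.
Implicit Types (s t u : {ffun I -> bool}) (p q r w : pauli_on) (U W : {set pauli_on}).

Definition xorf s t : {ffun I -> bool} := [ffun i => s i (+) t i].
Definition zerof : {ffun I -> bool} := [ffun => false].
Definition padd p q : pauli_on := (xorf p.1 q.1, xorf p.2 q.2).
Definition pauli0 : pauli_on := (zerof, zerof).
Definition dotf s t : bool := \big[addb/false]_(i : I) (s i && t i).
Definition symf p q : bool := dotf p.1 q.2 (+) dotf p.2 q.1.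

Definition perp W : {set pauli_on} := [set p | [forall w in W, ~~ symf p w]].
Definition sumset U W : {set pauli_on} := [set padd u w | u in U, w in W].
Definition subspace W : Prop := pauli0 \in W /\ {in W &, forall p q, padd p q \in W}.
Definition isotropic W : Prop := {in W &, forall p q, symf p q = false}.

Lemma xorfE s t i : xorf s t i = s i (+) t i. Proof. exact: ffunE. Qed.
Lemma xorfC s t : xorf s t = xorf t s.
Proof. by apply/ffunP => i; rewrite !xorfE addbC. Qed.
Lemma xorfA s t u : xorf s (xorf t u) = xorf (xorf s t) u.
Proof. by apply/ffunP => i; rewrite !xorfE addbA. Qed.
Lemma xorf0 s : xorf s zerof = s.
Proof. by apply/ffunP => i; rewrite xorfE ffunE addbF. Qed.
Lemma xorfK t s : xorf (xorf s t) t = s.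
Proof. by apply/ffunP => i; rewrite !xorfE -addbA addbb addbF. Qed.

Lemma xorf_inj t : injective (xorf^~ t).
Proof. exact: (can_inj (g := xorf^~ t) (xorfK t)). Qed.

Lemma paddC p q : padd p q = padd q p.
Proof. by rewrite /padd xorfC (xorfC p.2). Qed.
Lemma paddA p q r : padd p (padd q r) = padd (padd p q) r.
Proof. by rewrite /padd !xorfA. Qed.
Lemma padd0 p : padd p pauli0 = p.
Proof. by case: p => a b; rewrite /padd /= !xorf0. Qed.
Lemma add0p p : padd pauli0 p = p.
Proof. by rewrite paddC padd0. Qed.
Lemma paddK q p : padd (padd p q) q = p.
Proof. by rewrite /padd /= !xorfK; case: p. Qed.

Lemma dotfC s t : dotf s t = dotf t s.
Proof. by apply: eq_bigr => i _; rewrite andbC. Qed.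
Lemma dotfDl s t u : dotf (xorf s t) u = dotf s u (+) dotf t u.
Proof.
rewrite /dotf -big_split; apply: eq_bigr => i _.
by rewrite xorfE; case: (s i); case: (t i); case: (u i).
Qed.
Lemma dotfDr s t u : dotf u (xorf s t) = dotf u s (+) dotf u t.
Proof. by rewrite dotfC dotfDl !(dotfC u). Qed.
Lemma dotf0 t : dotf zerof t = false.
Proof. by rewrite /dotf big1 // => i _; rewrite ffunE. Qed.

Lemma symfC p q : symf p q = symf q p.
Proof. by rewrite /symf dotfC (dotfC p.2) addbC. Qed.
Lemma symfDl p q r : symf (padd p q) r = symf p r (+) symf q r.
Proof. by rewrite /symf /= !dotfDl addbACA. Qed.
Lemma symf0p p : symf pauli0 p = false.
Proof. by rewrite /symf !dotf0. Qed.

Lemma perpP W p : reflect {in W, forall w, symf p w = false} (p \in perp W).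
Proof.
rewrite inE; apply: (iffP forall_inP) => H w Hw; first exact/negbTE/H.
by rewrite H.
Qed.

Lemma perpS U W : U \subset W -> perp W \subset perp U.
Proof.
move/subsetP => sUW; apply/subsetP => p /perpP Hp.
by apply/perpP => u /sUW; apply: Hp.
Qed.

Lemma sub_perpK W : W \subset perp (perp W).
Proof. by apply/subsetP => p Hp; apply/perpP => q /perpP Hq; rewrite symfC Hq. Qed.

Lemma perp_subspace W : subspace (perp W).
Proof.
split; first by apply/perpP => w _; rewrite symf0p.
by move=> p q /perpP Hp /perpP Hq; apply/perpP => w Hw; rewrite symfDl Hp ?Hq.
Qed.

Lemma sumset_subspace U W : subspace U -> subspace W -> subspace (sumset U W).
Proof.
move=> [U0 HU] [W0 HW]; split; first by apply/imset2P; exists pauli0 pauli0; rewrite ?padd0.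
move=> p q /imset2P [u1 w1 Hu1 Hw1 ->] /imset2P [u2 w2 Hu2 Hw2 ->].
apply/imset2P; exists (padd u1 u2) (padd w1 w2); [exact: HU | exact: HW |].
by rewrite !paddA -(paddA u1 w1) (paddC w1) !paddA.
Qed.

Lemma subspace_setI U W : subspace U -> subspace W -> subspace (U :&: W).
Proof.
move=> [U0 UD] [W0 WD]; split => [|p q]; first by rewrite inE U0.
by rewrite !inE => /andP [? ?] /andP [? ?]; rewrite UD ?WD.
Qed.

Lemma subset_sumsetl U W : subspace W -> U \subset sumset U W.
Proof. by move=> [W0 _]; apply/subsetP => u Hu; apply/imset2P; exists u pauli0; rewrite ?padd0. Qed.

Lemma subset_sumsetr U W : subspace U -> W \subset sumset U W.
Proof. by move=> [U0 _]; apply/subsetP => w Hw; apply/imset2P; exists pauli0 w; rewrite ?add0p. Qed.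

End Symplectic.

Arguments zerof {I}.
Arguments pauli0 {I}.

Section Dimension.
Variable I : finType.
Local Open Scope ring_scope.
Local Notation N := #|I|.
Implicit Types (s t : {ffun I -> bool}) (p q : pauli_on I) (W : {set pauli_on I}).

Definition b2F (b : bool) : 'F_2 := b%:R.

Lemma b2F_inj : injective b2F. Proof. by do 2!case. Qed.
Lemma b2FD a b : b2F (a (+) b) = b2F a + b2F b.
Proof. by case: a; case: b; apply/val_inj. Qed.
Lemma b2FM a b : b2F (a && b) = b2F a * b2F b.
Proof. by case: a; case: b; apply/val_inj. Qed.

Definition rv s : 'rV['F_2]_N := \row_j b2F (s (enum_val j)).
Definition vec p : 'rV['F_2]_(N + N) := row_mx (rv p.1) (rv p.2).
Definition svec p : 'rV['F_2]_(N + N) := row_mx (rv p.2) (rv p.1).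

Lemma rv_inj : injective rv.
Proof.
move=> s t /rowP E; apply/ffunP => i; apply: b2F_inj.
by have := E (enum_rank i); rewrite !mxE enum_rankK.
Qed.

Lemma vec_inj : injective vec.
Proof. by move=> [a b] [c d] /eq_row_mx [/rv_inj /= -> /rv_inj /= ->]. Qed.

Lemma svec_inj : injective svec.
Proof. by move=> [a b] [c d] /eq_row_mx [/rv_inj /= -> /rv_inj /= ->]. Qed.

Lemma card_pauli_on : #|{: pauli_on I}| = (2 ^ (N + N))%N.
Proof. by rewrite card_prod !card_ffun card_bool -expnD. Qed.

Lemma svec_bij : bijective svec.
Proof. by apply: inj_card_bij svec_inj _; rewrite card_mx card_Fp // card_pauli_on mul1n. Qed.

Lemma rvD s t : rv (xorf s t) = rv s + rv t.
Proof. by apply/rowP => j; rewrite !mxE xorfE b2FD. Qed.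

Lemma vecD p q : vec (padd p q) = vec p + vec q.
Proof. by rewrite /vec !rvD add_row_mx. Qed.

Lemma vec0 : vec pauli0 = 0.
Proof.
have rv0 : rv zerof = 0 by apply/rowP => j; rewrite !mxE ffunE.
by rewrite /vec rv0 row_mx0.
Qed.

Lemma rv_dot s t : (rv s *m (rv t)^T) 0 0 = b2F (dotf s t).
Proof.
rewrite /dotf (big_morph b2F b2FD (erefl (b2F false))) mxE.
rewrite (reindex (@enum_val I I)) /=; last exact/onW_bij/enum_val_bij.
by apply: eq_bigr => j _; rewrite !mxE b2FM.
Qed.

Lemma symf_vec p q : (svec p *m (vec q)^T) 0 0 = b2F (symf p q).
Proof. by rewrite tr_row_mx mul_row_col mxE !rv_dot b2FD addrC. Qed.

Lemma card_rowspace r (M : 'M['F_2]_(r, N + N)) :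
  #|[set v : 'rV_(N + N) | (v <= M)%MS]| = (2 ^ \rank M)%N.
Proof.
have -> : [set v : 'rV_(N + N) | (v <= M)%MS] = [set u *m row_base M | u : 'rV_(\rank M)].
  apply/setP => v; rewrite inE; apply/idP/imsetP => [|[u _ ->]].
    by rewrite -[(v <= M)%MS](eq_row_base M) => /submxP [u ->]; exists u.
  by rewrite -[(_ *m _ <= M)%MS](eq_row_base M) submxMl.
rewrite card_imset; last exact: (row_free_inj (row_base_free M)).
by rewrite card_mx card_Fp // mul1n.
Qed.

Section OfSubspace.
Variable W : {set pauli_on I}.
Hypothesis subW : subspace W.

Let MW : 'M['F_2]_(#|W|, N + N) := \matrix_(j < #|W|) vec (enum_val j).

Lemma imset_vec_subspace : vec @: W = [set v | (v <= MW)%MS].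
Proof.
have [W0 WD] := subW; apply/setP => v; rewrite inE; apply/imsetP/idP.
  case=> p Wp ->; rewrite -(enum_rankK_in Wp Wp).
  by rewrite -(rowK (fun j => vec (enum_val j))) row_sub.
case/submxP => u ->; rewrite mulmx_sum_row.
apply: (big_ind (fun v => exists2 p, p \in W & v = vec p)).
- by exists pauli0; rewrite ?vec0.
- by move=> _ _ [p Wp ->] [q Wq ->]; exists (padd p q); rewrite ?vecD ?WD.
move=> j _; rewrite rowK; case: (u 0 j) => [[|[|//]] ?] /=.
  by exists pauli0; rewrite ?vec0 // (_ : Ordinal _ = 0) ?scale0r //; apply: val_inj.
by exists (enum_val j); rewrite ?enum_valP // (_ : Ordinal _ = 1) ?scale1r //; apply: val_inj.
Qed.

Lemma perp_svec_kermx : perp W = svec @^-1: [set v | (v <= kermx MW^T)%MS].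
Proof.
apply/setP => p; rewrite [RHS]inE [RHS]inE.
have entry j : (svec p *m MW^T) 0 j = b2F (symf p (enum_val j)).
  by rewrite -symf_vec !mxE; apply: eq_bigr => k _; rewrite !mxE.
apply/perpP/sub_kermxP => [H | /rowP H w Ww].
  by apply/rowP => j; rewrite entry H ?enum_valP // mxE.
by apply: b2F_inj; rewrite -(enum_rankK_in Ww Ww) -entry H mxE.
Qed.

Lemma card_subspace_perp : (#|W| * #|perp W|)%N = (2 ^ (N + N))%N.
Proof.
rewrite -(card_imset _ (@vec_inj)) imset_vec_subspace card_rowspace perp_svec_kermx.
rewrite (on_card_preimset (onW_bij _ svec_bij)) card_rowspace.
by rewrite mxrank_ker mxrank_tr -expnD subnKC // rank_leq_col.
Qed.

End OfSubspace.

Lemma perpK W : subspace W -> perp (perp W) = W.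
Proof.
move=> subW; apply/esym/eqP; rewrite eqEcard sub_perpK /=.
have pW0 : (0 < #|perp W|)%N by apply/card_gt0P; exists pauli0; case: (perp_subspace W).
have := card_subspace_perp subW; rewrite -(card_subspace_perp (perp_subspace W)) mulnC.
by move/eqP; rewrite eqn_pmul2l // => /eqP ->.
Qed.

Lemma perp_setI U W : subspace U -> subspace W ->
  perp (U :&: W) \subset sumset (perp U) (perp W).
Proof.
move=> subU subW; rewrite -[sumset _ _]perpK;
  last exact/sumset_subspace/perp_subspace/perp_subspace.
apply/perpS; rewrite subsetI -{2}(perpK subU) -{3}(perpK subW).
by rewrite !perpS // ?subset_sumsetl ?subset_sumsetr //; apply: perp_subspace.
Qed.

Lemma perp_lagrangian W : subspace W -> isotropic W -> #|W| = (2 ^ N)%N -> perp W = W.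
Proof.
move=> subW isoW cardW; apply/esym/eqP; rewrite eqEcard.
have -> : W \subset perp W by apply/subsetP => p Wp; apply/perpP => q Wq; apply: isoW.
have := card_subspace_perp subW; rewrite cardW expnD => /eqP.
by rewrite eqn_pmul2l ?expn_gt0 // => /eqP ->; rewrite leqnn.
Qed.

End Dimension.

Section Coisotropic.
Variable I : finType.
Implicit Types (p x : pauli_on I) (W D : {set pauli_on I}).

Definition center W : {set pauli_on I} := [set y in W | [forall z in W, ~~ symf y z]].

Lemma mem_coisotropic W x : subspace W -> perp W \subset W ->
  x \in W <-> (forall z, z \in center W -> ~~ symf x z).
Proof.
move=> subW coW; split => [Wx z | Hx].
  by rewrite inE => /andP [_ /forall_inP /(_ x Wx)]; rewrite symfC.
have centerE : center W = perp W.
  apply/setP => y; rewrite !inE andb_idl // => /forall_inP Hy.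
  by apply: (subsetP coW); apply/perpP => w /Hy /negbTE.
by rewrite -(perpK subW); apply/perpP => z; rewrite -centerE => /Hx /negbTE.
Qed.

Lemma coisotropic_reduction W D : subspace W -> perp W \subset W ->
    subspace D -> isotropic D ->
  perp (sumset (W :&: perp D) D) \subset sumset (W :&: perp D) D.
Proof.
move=> subW coW subD isoD; apply/subsetP => p Xp.
have subX := subspace_setI subW (perp_subspace D).
have pD : p \in perp D := subsetP (perpS (subset_sumsetr _ subX)) p Xp.
have pX : p \in perp (W :&: perp D) := subsetP (perpS (subset_sumsetl _ subD)) p Xp.
have /imset2P [w d Ww Dd pE] := subsetP (perp_setI subW (perp_subspace D)) p pX.
rewrite perpK // in Dd; apply/imset2P; exists w d => //.
have dD : d \in perp D by apply/perpP => e De; apply: isoD.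
rewrite inE (subsetP coW _ Ww) -(paddK d w) -pE.
by apply: (perp_subspace D).2.
Qed.

End Coisotropic.

Section Restriction.
Variables (I J : finType) (o : J -> I).
Hypothesis o_inj : injective o.
Implicit Types (g : pauli_on I) (y : pauli_on J) (S D : {set pauli_on I}).

Definition restr g : pauli_on J := ([ffun j => g.1 (o j)], [ffun j => g.2 (o j)]).

Definition extf (s : {ffun J -> bool}) : {ffun I -> bool} :=
  [ffun i => if [pick j | o j == i] is Some j then s j else false].
Definition ext y : pauli_on I := (extf y.1, extf y.2).

Lemma extfE s j : extf s (o j) = s j.
Proof. by rewrite ffunE; case: pickP => [j' /eqP /o_inj -> // | /(_ j)]; rewrite eqxx. Qed.

Lemma restr_ext y : restr (ext y) = y.
Proof. by case: y => a b; congr pair; apply/ffunP => j; rewrite ffunE extfE. Qed.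

Lemma restrD g h : restr (padd g h) = padd (restr g) (restr h).
Proof. by congr pair; apply/ffunP => j; rewrite !ffunE. Qed.

Lemma restr0 : restr pauli0 = pauli0.
Proof. by congr pair; apply/ffunP => j; rewrite !ffunE. Qed.

Lemma extf_out s i : i \notin [set o j | j in J] -> extf s i = false.
Proof. by move=> nIo; rewrite ffunE; case: pickP => // j /eqP ji; case/imsetP: nIo; exists j. Qed.

Lemma dotf_ext s t : dotf (extf s) t = dotf s [ffun j => t (o j)].
Proof.
rewrite /dotf (bigID [in [set o j | j in J]]) /= [X in _ (+) X]big1 => [|i /extf_out -> //].
rewrite addbF big_imset /=; last by move=> ? ? _ _; apply: o_inj.
by apply: eq_bigr => j _; rewrite extfE ffunE.
Qed.

Lemma symf_ext y g : symf (ext y) g = symf y (restr g).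
Proof. by rewrite /symf /= !dotf_ext. Qed.

Lemma restr_subspace S : subspace S -> subspace (restr @: S).
Proof.
move=> [S0 SD]; split; first by apply/imsetP; exists pauli0; rewrite ?restr0.
move=> _ _ /imsetP [g Sg ->] /imsetP [h Sh ->].
by apply/imsetP; exists (padd g h); rewrite ?restrD ?SD.
Qed.

Lemma perp_restr S : subspace S -> perp S \subset S -> perp (restr @: S) \subset restr @: S.
Proof.
move=> subS coS; apply/subsetP => y /perpP Hy.
apply/imsetP; exists (ext y); last by rewrite restr_ext.
apply: (subsetP coS); apply/perpP => g Sg; rewrite symf_ext; apply: Hy.
by apply/imsetP; exists g.
Qed.

Lemma restr_sumset_null S D : subspace D -> {in D, forall d, restr d = pauli0} ->
  restr @: sumset S D = restr @: S.
Proof.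
move=> [D0 _] Dnull; apply/setP => y.
apply/imsetP/imsetP => [[_ /imset2P [g d Sg Dd ->] ->] | [g Sg ->]].
  by exists g; rewrite // restrD (Dnull d Dd) padd0.
by exists (padd g pauli0); [apply/imset2P; exists g pauli0 | rewrite padd0].
Qed.

End Restriction.

Local Open Scope ring_scope.

Definition signb (b : bool) : algC := if b then -1 else 1.

Lemma signbD a b : signb (a (+) b) = signb a * signb b.
Proof. by case: a; case: b; rewrite /signb /= ?mulN1r ?mulr1 ?mul1r ?opprK. Qed.

Lemma signb_inj : injective signb.
Proof.
have N1_neq1 : (-1 : algC) != 1 by rewrite -subr_eq0 -opprD oppr_eq0 (pnatr_eq0 _ 2).
by case; case => //= /eqP; rewrite ?(negbTE N1_neq1) // eq_sym (negbTE N1_neq1).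
Qed.

Lemma expCi_mod4 k : 'i ^+ (k %% 4) = 'i ^+ k :> algC.
Proof.
have i4 : 'i ^+ 4 = 1 :> algC by rewrite (_ : 4 = 2 * 2)%N // exprM sqrCi sqrrN expr1n.
by rewrite {2}(divn_eq k 4) exprD mulnC exprM i4 expr1n mul1r.
Qed.

Lemma expCi_signb (b : bool) : 'i ^+ (2 * b) * signb b = 1 :> algC.
Proof. by case: b; rewrite /signb ?muln1 ?muln0 ?expr0 ?mulr1 // sqrCi mulrNN mulr1. Qed.

Section Stabilizer.
Variable m : nat.
Implicit Types (p q : pauli m) (psi : state m).

Lemma dotbE (s t : bits m) : dotb s t = dotf s t. Proof. by []. Qed.

Lemma pauli_actE p psi t :
  pauli_act p psi t = signb (dotb p.2 (xorb_bits t p.1)) * psi (xorb_bits t p.1).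
Proof. by []. Qed.

Lemma pauli_actD p q psi t :
  pauli_act (padd p q) psi t = signb (dotb p.2 q.1) * pauli_act p (pauli_act q psi) t.
Proof.
rewrite !pauli_actE /=.
set u := xorb_bits t p.1.
have -> : xorb_bits t (xorf p.1 q.1) = xorf u q.1.
  by apply/ffunP => i; rewrite !ffunE addbA.
by rewrite !dotbE dotfDl [dotf p.2 (xorf _ _)]dotfDr !signbD; ring.
Qed.

Lemma stab_groupP psi p : reflect
  (exists k : nat, forall t, 'i ^+ k * pauli_act p psi t = psi t) (p \in stab_group psi).
Proof.
rewrite inE; apply: (iffP existsP) => [[k /forallP Hk] | [k Hk]].
  by exists k => t; apply/eqP/Hk.
exists (Ordinal (ltn_pmod k (isT : (0 < 4)%N))); apply/forallP => t /=.
by rewrite expCi_mod4 Hk.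
Qed.

Lemma stab_comp psi p q k l :
  (forall t, 'i ^+ k * pauli_act p psi t = psi t) ->
  (forall t, 'i ^+ l * pauli_act q psi t = psi t) ->
  forall t, 'i ^+ (k + l) * pauli_act p (pauli_act q psi) t = psi t.
Proof.
move=> Hp Hq t; rewrite exprD -mulrA -{}[RHS]Hp; congr (_ * _).
by rewrite !pauli_actE -[in RHS]Hq mulrCA.
Qed.

Lemma stab_group_subspace psi : subspace (stab_group psi).
Proof.
split.
  apply/stab_groupP; exists 0%N => t; rewrite expr0 mul1r pauli_actE.
  have -> : xorb_bits t zerof = t by apply/ffunP => i; rewrite !ffunE addbF.
  by rewrite dotbE dotf0 mul1r.
move=> p q /stab_groupP [k Hp] /stab_groupP [l Hq]; apply/stab_groupP.
exists (k + l + 2 * dotb p.2 q.1)%N => t.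
rewrite pauli_actD exprD -(stab_comp Hp Hq t) -[RHS]mul1r -(expCi_signb (dotb p.2 q.1)).
set a := 'i ^+ (k + l); set b := 'i ^+ _; set c := signb _; set X := pauli_act _ _ _.
by rewrite [a * b]mulrC -!mulrA; congr (b * _); rewrite mulrCA.
Qed.

Lemma stab_group_isotropic psi : (exists t, psi t != 0) -> isotropic (stab_group psi).
Proof.
case=> t0 nz0 p q /stab_groupP [k Hp] /stab_groupP [l Hq].
have Epq := stab_comp Hp Hq t0; have Eqp := stab_comp Hq Hp t0.
have E : signb (dotb p.2 q.1) * pauli_act p (pauli_act q psi) t0 =
          signb (dotb q.2 p.1) * pauli_act q (pauli_act p psi) t0.
  by rewrite -!pauli_actD paddC.
have : signb (dotb p.2 q.1) * psi t0 = signb (dotb q.2 p.1) * psi t0.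
  by rewrite -{1}Epq -Eqp addnC mulrCA E mulrCA.
move/(mulIf nz0)/signb_inj; rewrite /symf (dotfC p.1) !dotbE => ->; exact: addbb.
Qed.

End Stabilizer.

Local Close Scope ring_scope.

Lemma widen_neq_max m (j : 'I_m) : (widen_ord (leqnSn m) j == ord_max) = false.
Proof. by rewrite -val_eqE /= ltn_eqF. Qed.

Section Peps.
Variables (A : tensor) (n' d' : nat).
Local Notation n := n'.+1.
Local Notation d := d'.+1.

Definition Site := ('I_n * 'I_d)%type.
Definition Leg := (Site * 'I_5)%type.
Definition leg_s : 'I_5 := @Ordinal 5 0 isT.
Definition leg_u : 'I_5 := @Ordinal 5 1 isT.
Definition leg_d : 'I_5 := @Ordinal 5 2 isT.
Definition leg_l : 'I_5 := @Ordinal 5 3 isT.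
Definition leg_r : 'I_5 := @Ordinal 5 4 isT.

Lemma ord5_ind (P : 'I_5 -> Prop) :
  P leg_s -> P leg_u -> P leg_d -> P leg_l -> P leg_r -> forall k, P k.
Proof.
move=> Ps Pu Pd Pl Pr [k lt_k5].
by do 5![case: k lt_k5 => [|k] lt_k5; first by rewrite (bool_irrelevance lt_k5 isT)].
Qed.

Definition up (x : Site) : Site := (ordS' x.1, x.2).

Lemma up_inj : injective up.
Proof.
move=> [i j] [i' j'] E; have /= Ei := congr1 fst E; have /= -> := congr1 snd E.
by rewrite (ordS_inj Ei).
Qed.

Definition hstep (j : 'I_d') : 'I_d := widen_ord (leqnSn d') j.

Definition out_leg (o : 'I_(n + n)) : Leg :=
  match split o with inl i => ((i, ord0), leg_l) | inr i => ((i, ord_max), leg_r) end.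

Lemma out_legL i : out_leg (lshift n i) = ((i, ord0), leg_l).
Proof. by rewrite /out_leg (unsplitK (inl _ i)). Qed.

Lemma out_legR i : out_leg (rshift n i) = ((i, ord_max), leg_r).
Proof. by rewrite /out_leg (unsplitK (inr _ i)). Qed.

Lemma out_leg_inj : injective out_leg.
Proof.
move=> o1 o2; rewrite -(splitK o1) -(splitK o2).
by case: (split o1) => i1; case: (split o2) => i2; rewrite ?out_legL ?out_legR => -[] // ->.
Qed.

Definition bond_constant (a : {ffun Leg -> bool}) : bool :=
  [forall x, a (x, leg_u) == a (up x, leg_d)] &&
  [forall i, forall j, a ((i, hstep j), leg_r) == a ((i, lift ord0 j), leg_l)].

Lemma bond_constantP (a : {ffun Leg -> bool}) : reflect
  ((forall x, a (x, leg_u) = a (up x, leg_d)) /\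
   (forall i j, a ((i, hstep j), leg_r) = a ((i, lift ord0 j), leg_l)))
  (bond_constant a).
Proof.
apply: (iffP andP) => [[/forallP Hv /forallP Hh] | [Hv Hh]]; split.
- by move=> x; apply/eqP/Hv.
- by move=> i j; move/forallP: (Hh i) => /(_ j) /eqP.
- by apply/forallP => x; rewrite Hv.
- by apply/forallP => i; apply/forallP => j; rewrite Hh.
Qed.

Lemma bond_constant0 : bond_constant zerof.
Proof. by apply/bond_constantP; split => *; rewrite !ffunE. Qed.

Lemma bond_constantD a b : bond_constant a -> bond_constant b -> bond_constant (xorf a b).
Proof.
move=> /bond_constantP [Hav Hah] /bond_constantP [Hbv Hbh]; apply/bond_constantP.
by split => *; rewrite !xorfE ?Hav ?Hbv ?Hah ?Hbh.
Qed.

Lemma big_addb_leg (F : Leg -> bool) :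
  \big[addb/false]_(l : Leg) F l = \big[addb/false]_(x : Site)
    (F (x, leg_s) (+) F (x, leg_u) (+) F (x, leg_d) (+) F (x, leg_l) (+) F (x, leg_r)).
Proof.
transitivity (\big[addb/false]_(x : Site) \big[addb/false]_(k < 5) F (x, k)).
  by rewrite pair_big; apply: eq_bigr => -[].
apply: eq_bigr => x _; rewrite !big_ord_recl big_ord0 addbF !addbA.
by congr (_ (+) _ (+) _ (+) _ (+) _); congr (F (x, _)); apply: val_inj.
Qed.

Lemma big_addb_site (F : Site -> bool) :
  \big[addb/false]_(x : Site) F x = \big[addb/false]_(i < n) \big[addb/false]_(j < d) F (i, j).
Proof. by rewrite pair_big; apply: eq_bigr => -[]. Qed.

Lemma big_addb_bonds (f : Leg -> bool) :
    (forall x, f (x, leg_u) = f (up x, leg_d)) ->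
    (forall i j, f ((i, hstep j), leg_r) = f ((i, lift ord0 j), leg_l)) ->
    (forall x, f (x, leg_s) = false) ->
  \big[addb/false]_(l : Leg) f l =
  \big[addb/false]_(i < n) (f ((i, ord0), leg_l) (+) f ((i, ord_max), leg_r)).
Proof.
move=> fv fh fs; rewrite big_addb_leg.
under eq_bigr => x _ do rewrite fs addFb.
rewrite !big_split /=.
have -> : \big[addb/false]_(x : Site) f (x, leg_u) = \big[addb/false]_(x : Site) f (x, leg_d).
  by rewrite [RHS](reindex_inj up_inj); apply: eq_bigr => x _; apply: fv.
rewrite addbb addFb -big_split -[in RHS]big_split big_addb_site; apply: eq_bigr => i _.
rewrite big_split /= big_ord_recl big_ord_recr /=.
have -> : \big[addb/false]_(j < d') f ((i, lift ord0 j), leg_l) =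
          \big[addb/false]_(j < d') f ((i, hstep j), leg_r).
  by apply: eq_bigr => j _; rewrite fh.
set X := \big[addb/false]_(j < d') _.
by rewrite -addbA (addbA X) addbb addFb.
Qed.

Lemma dotf_bond_constant a b :
  bond_constant a -> bond_constant b -> (forall x, a (x, leg_s) = false) ->
  dotf a b = dotf [ffun o => a (out_leg o)] [ffun o => b (out_leg o)].
Proof.
move=> /bond_constantP [av ah] /bond_constantP [bv bh] a_s.
rewrite [LHS]big_addb_bonds => [|x|i j|x]; rewrite ?av ?bv ?ah ?bh ?a_s //.
rewrite big_split /dotf big_split_ord /=.
by congr addb; apply: eq_bigr => i _; rewrite !ffunE ?out_legL ?out_legR.
Qed.

Definition bond_vec (a : {ffun Leg -> bool}) : bool :=
  bond_constant a && [forall o, ~~ a (out_leg o)].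

(* Spanned by X on physical legs and by XX and ZZ on bonds. *)
Definition contraction : {set pauli_on Leg} :=
  [set g | [&& bond_vec g.1, bond_vec g.2 & [forall x, ~~ g.2 (x, leg_s)]]].

Lemma bond_vecP a : reflect (bond_constant a /\ forall o, a (out_leg o) = false) (bond_vec a).
Proof.
apply: (iffP andP) => [[ca /forallP Ha] | [ca Ha]]; split => //.
  by move=> o; apply/negbTE/Ha.
by apply/forallP => o; rewrite Ha.
Qed.

Lemma contractionP g : reflect
  [/\ bond_vec g.1, bond_vec g.2 & forall x, g.2 (x, leg_s) = false] (g \in contraction).
Proof.
rewrite inE; apply: (iffP and3P) => [[b1 b2 /forallP Hs] | [b1 b2 Hs]]; split => //.
  by move=> x; apply/negbTE/Hs.
by apply/forallP => x; rewrite Hs.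
Qed.

Lemma bond_vec0 : bond_vec zerof.
Proof. by apply/bond_vecP; split => *; rewrite ?ffunE ?bond_constant0. Qed.

Lemma contraction_subspace : subspace contraction.
Proof.
split; first by apply/contractionP; split; rewrite ?bond_vec0 // => x; rewrite ffunE.
move=> g h /contractionP [/bond_vecP [cg1 og1] /bond_vecP [cg2 og2] sg].
move=> /contractionP [/bond_vecP [ch1 oh1] /bond_vecP [ch2 oh2] sh].
apply/contractionP; split.
- by apply/bond_vecP; split => [|o]; rewrite ?bond_constantD // xorfE og1 oh1.
- by apply/bond_vecP; split => [|o]; rewrite ?bond_constantD // xorfE og2 oh2.
- by move=> x; rewrite xorfE sg sh.
Qed.

Lemma restr_contraction : {in contraction, forall g, restr out_leg g = pauli0}.
Proof.
move=> g /contractionP [/bond_vecP [_ o1] /bond_vecP [_ o2] _].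
by congr pair; apply/ffunP => o; rewrite !ffunE ?o1 ?o2.
Qed.

Lemma dotf_bond_vec a b : bond_vec a -> bond_constant b -> (forall x, a (x, leg_s) = false) ->
  dotf a b = false.
Proof.
move=> /bond_vecP [ca oa] cb sa; rewrite dotf_bond_constant // /dotf big1 // => o _.
by rewrite !ffunE oa.
Qed.

Lemma contraction_isotropic : isotropic contraction.
Proof.
move=> g h /contractionP [/andP [cg1 _] bg2 sg] /contractionP [/andP [ch1 _] bh2 sh].
by rewrite /symf dotfC !dotf_bond_vec.
Qed.

Definition delta (l0 : Leg) : {ffun Leg -> bool} := [ffun l => l == l0].
Definition bond_pair (l l' : Leg) : {ffun Leg -> bool} := xorf (delta l) (delta l').

Lemma dotf_delta s l0 : dotf s (delta l0) = s l0.
Proof.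
rewrite /dotf (bigD1 l0) //= ffunE eqxx andbT big1 ?addbF // => l /negbTE nl.
by rewrite ffunE nl andbF.
Qed.

Lemma dotf_bond_pair s l l' : dotf s (bond_pair l l') = s l (+) s l'.
Proof. by rewrite dotfDr !dotf_delta. Qed.

Lemma out_leg_lr o : ((out_leg o).2 == leg_l) || ((out_leg o).2 == leg_r).
Proof. by rewrite /out_leg; case: (split o). Qed.

Lemma delta_out (x : Site) k o : k \notin [:: leg_l; leg_r] -> delta (x, k) (out_leg o) = false.
Proof.
rewrite !inE ffunE => /norP [kl kr]; apply/negbTE/(contraL _ (out_leg_lr o)) => /eqP -> /=.
by rewrite negb_or kl kr.
Qed.

Lemma bond_vec_phys x : bond_vec (delta (x, leg_s)).
Proof.
apply/bond_vecP; split => [|o]; last exact: delta_out.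
by apply/bond_constantP; split => *; rewrite !ffunE !xpair_eqE !andbF.
Qed.

Lemma bond_vec_vert x : bond_vec (bond_pair (x, leg_u) (up x, leg_d)).
Proof.
apply/bond_vecP; split => [|o]; last by rewrite xorfE !delta_out.
apply/bond_constantP; split => [y|i j]; last by rewrite !xorfE !ffunE !xpair_eqE !andbF.
rewrite !xorfE !ffunE !xpair_eqE /= !andbT !andbF addbF (inj_eq (@ordS_inj _)).
by rewrite -xpair_eqE -!surjective_pairing.
Qed.

Lemma bond_vec_horiz i j : bond_vec (bond_pair ((i, hstep j), leg_r) ((i, lift ord0 j), leg_l)).
Proof.
apply/bond_vecP; split => [|o].
  apply/bond_constantP; split => [y|i' j']; first by rewrite !xorfE !ffunE !xpair_eqE !andbF.
  by rewrite !xorfE !ffunE !xpair_eqE /= !andbT !andbF addbF.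
rewrite /out_leg xorfE !ffunE; case: (split o) => i'; rewrite !xpair_eqE /= ?andbF ?andbT //=.
by rewrite [ord_max == _]eq_sym widen_neq_max andbF.
Qed.

Lemma perp_contraction g : g \in perp contraction ->
  [/\ forall x, g.2 (x, leg_s) = false, bond_constant g.1 & bond_constant g.2].
Proof.
move/perpP => Hg.
have testX a : bond_vec a -> dotf g.2 a = false.
  move=> ba; have /Hg : (a, zerof) \in contraction.
    by apply/contractionP; split; rewrite ?bond_vec0 // => x; rewrite ffunE.
  by rewrite /symf /= [dotf g.1 _]dotfC dotf0.
have testZ a : bond_vec a -> (forall x, a (x, leg_s) = false) -> dotf g.1 a = false.
  move=> ba sa; have /Hg : (zerof, a) \in contraction by apply/contractionP; rewrite bond_vec0.
  by rewrite /symf /= [dotf g.2 _]dotfC dotf0 addbF.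
have bond_eq s l l' : dotf s (bond_pair l l') = false -> s l = s l'.
  by rewrite dotf_bond_pair => /negbT; rewrite negb_add => /eqP.
split.
- by move=> x; rewrite -(dotf_delta g.2) testX ?bond_vec_phys.
- apply/bond_constantP; split => [x | i j]; apply: bond_eq; apply: testZ;
    rewrite ?bond_vec_vert ?bond_vec_horiz // => y; by rewrite xorfE !ffunE !xpair_eqE !andbF.
- by apply/bond_constantP; split => *; apply: bond_eq; rewrite testX ?bond_vec_vert ?bond_vec_horiz.
Qed.

Definition site_pauli (g : pauli_on Leg) (x : Site) : pauli 5 := restr (pair x) g.

Lemma symf_site g h : symf g h = \big[addb/false]_(x : Site) symf (site_pauli g x) (site_pauli h x).
Proof.
have dotf_site (s t : {ffun Leg -> bool}) :
    dotf s t = \big[addb/false]_(x : Site) dotf [ffun k => s (x, k)] [ffun k => t (x, k)].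
  by rewrite /dotf pair_big; apply: eq_bigr => -[x k] _; rewrite !ffunE.
by rewrite /symf !dotf_site -big_split.
Qed.

Definition local_stab : {set pauli_on Leg} :=
  [set g | [forall x, site_pauli g x \in stab_group (tensor_vec A)]].

Lemma local_stab_subspace : subspace local_stab.
Proof.
have [SA0 SAD] := stab_group_subspace (tensor_vec A).
split; first by rewrite inE; apply/forallP => x; rewrite /site_pauli restr0.
move=> g h; rewrite !inE => /forallP Hg /forallP Hh; apply/forallP => x.
by rewrite /site_pauli restrD; apply: SAD; [exact: Hg | exact: Hh].
Qed.

Hypothesis stabA : is_stabilizer_tensor A.

Lemma local_stab_isotropic : isotropic local_stab.
Proof.
have [/existsP nzA _] := andP stabA.
move=> g h; rewrite !inE => /forallP Hg /forallP Hh; rewrite symf_site big1 // => x _.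
exact: stab_group_isotropic nzA _ _ (Hg x) (Hh x).
Qed.

Lemma card_local_stab : #|local_stab| = 2 ^ #|{: Leg}|.
Proof.
pose sites g : {ffun Site -> pauli 5} := [ffun x => site_pauli g x].
pose glue (f : {ffun Site -> pauli 5}) : pauli_on Leg :=
  ([ffun l => (f l.1).1 l.2], [ffun l => (f l.1).2 l.2]).
have sites_bij : bijective sites.
  exists glue => [[a b] | f]; first by congr pair; apply/ffunP => -[x k]; rewrite !ffunE.
  apply/ffunP => x; rewrite ffunE; case E : (f x) => [a b].
  by congr pair; apply/ffunP => k; rewrite !ffunE E.
have -> : local_stab = sites @^-1: ffun_on (stab_group (tensor_vec A)).
  by apply/setP => g; rewrite !inE; apply/forallP/ffun_onP => H x; move: (H x); rewrite ffunE.
rewrite (on_card_preimset (onW_bij _ sites_bij)) card_ffun_on.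
have [_ /eqP ->] := andP stabA.
by rewrite [in RHS]card_prod card_ord -expnM mulnC.
Qed.

Lemma perp_local_stab : perp local_stab = local_stab.
Proof. exact: perp_lagrangian local_stab_subspace local_stab_isotropic card_local_stab. Qed.

Local Open Scope ring_scope.

Definition bits5 (b0 b1 b2 b3 b4 : bool) : bits 5 :=
  [ffun k : 'I_5 => nth false [:: b0; b1; b2; b3; b4] k].

Lemma tensor_vec_bits5 b0 b1 b2 b3 b4 : tensor_vec A (bits5 b0 b1 b2 b3 b4) = A b0 b1 b2 b3 b4.
Proof. by rewrite /tensor_vec !ffunE !inordK. Qed.

Definition site_config (s w : {ffun Site -> bool}) (h : {ffun 'I_n * 'I_d.+1 -> bool}) x :=
  bits5 (s x) (w (up x)) (w x) (h (x.1, widen_ord (leqnSn d) x.2)) (h (x.1, lift ord0 x.2)).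

Definition boundary (h : {ffun 'I_n * 'I_d.+1 -> bool}) (t : bits (n + n)) : bool :=
  [forall i, (h (i, ord0) == t (lshift n i)) && (h (i, ord_max) == t (rshift n i))].

Lemma peps_stateE t : peps_state A n d t =
  \sum_(w : {ffun Site -> bool}) \sum_(h : {ffun 'I_n * 'I_d.+1 -> bool} | boundary h t)
  \sum_(s : {ffun Site -> bool}) \prod_(x : Site) tensor_vec A (site_config s w h x).
Proof.
apply: eq_bigr => w _; apply: eq_bigr => h _; apply: eq_bigr => s _.
by apply: eq_bigr => x _; rewrite tensor_vec_bits5.
Qed.

(* h (i, k) is the left leg of site (i, k), except h (i, d), the right leg of
   the last site of row i. *)
Definition hshift (a : {ffun Leg -> bool}) : {ffun 'I_n * 'I_d.+1 -> bool} :=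
  [ffun ik => if ik.2 == ord_max then a ((ik.1, ord_max), leg_r)
              else a ((ik.1, inord ik.2), leg_l)].

Lemma hshift_widen a i (j : 'I_d) : hshift a (i, widen_ord (leqnSn d) j) = a ((i, j), leg_l).
Proof.
rewrite ffunE /= (_ : widen_ord _ j == ord_max = false); last exact: widen_neq_max.
by congr (a (_, _)); congr pair; apply: val_inj; rewrite /= inordK.
Qed.

Lemma hshift_lift a i (j : 'I_d) : bond_constant a -> hshift a (i, lift ord0 j) = a ((i, j), leg_r).
Proof.
move=> /bond_constantP [_ ah]; rewrite ffunE /=.
have [-> | jmax] := eqVneq j ord_max.
  by rewrite (_ : lift ord0 ord_max == ord_max) //; apply/eqP/val_inj.
have jd' : (j < d')%N.
  by rewrite ltn_neqAle -ltnS ltn_ord andbT; apply: contra jmax => /eqP jE; apply/eqP/val_inj.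
rewrite (_ : lift ord0 j == ord_max = false); last by rewrite -val_eqE /= /bump leq0n eqSS ltn_eqF.
rewrite (_ : j = hstep (Ordinal jd')) ?ah; last exact: val_inj.
by congr (a (_, _)); congr pair; apply: val_inj; rewrite /= inordK // /bump leq0n add1n ltnS.
Qed.

Lemma hshift0 a i : hshift a (i, ord0) = a ((i, ord0), leg_l).
Proof. by rewrite (_ : ord0 = widen_ord (leqnSn d) ord0) ?hshift_widen //; apply: val_inj. Qed.

Lemma hshift_max a i : hshift a (i, ord_max) = a ((i, ord_max), leg_r).
Proof. by rewrite ffunE /= eqxx. Qed.

Lemma boundary_shift g h t :
  boundary (xorf h (hshift g.1)) (xorb_bits t (restr out_leg g).1) = boundary h t.
Proof.
apply: eq_forallb => i; rewrite !xorfE hshift0 hshift_max !ffunE out_legL out_legR.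
by case: (h _); case: (h _); case: (t _); case: (t _); case: (g.1 _); case: (g.1 _).
Qed.

Section Contraction.
Variable g : pauli_on Leg.
Hypothesis g_loc : g \in local_stab.
Hypothesis g_perp : g \in perp contraction.

Let ds : {ffun Site -> bool} := [ffun y => g.1 (y, leg_s)].
Let dw : {ffun Site -> bool} := [ffun y => g.1 (y, leg_d)].

Lemma site_config_shift s w h x : xorb_bits (site_config s w h x) (site_pauli g x).1 =
  site_config (xorf s ds) (xorf w dw) (xorf h (hshift g.1)) x.
Proof.
have [_ c1 _] := perp_contraction g_perp; have [cv _] := bond_constantP _ c1.
apply/ffunP; apply: ord5_ind; rewrite !ffunE /= ?ffunE //.
- by rewrite cv.
- by have := hshift_widen g.1 x.1 x.2; rewrite ffunE /= => ->; case: x.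
- by have := hshift_lift x.1 x.2 c1; rewrite ffunE /= => ->; case: x.
Qed.

Lemma dotb_site_config s w h t : boundary h t ->
  \big[addb/false]_(x : Site) dotb (site_pauli g x).2 (site_config s w h x) =
  dotb (restr out_leg g).2 t.
Proof.
move=> /forallP bht; have [g_s _ c2] := perp_contraction g_perp.
pose b := [ffun l : Leg => site_config s w h l.1 l.2].
have cb : bond_constant b.
  apply/bond_constantP; split => [x | i j]; rewrite !ffunE //=.
  by congr (h (i, _)); apply: val_inj.
transitivity (dotf g.2 b).
  by rewrite /dotf pair_big; apply: eq_bigr => -[x k] _; rewrite !ffunE.
rewrite dotf_bond_constant //; apply: eq_bigr => o _; rewrite !ffunE.
case: (split_ordP o) => i ->; rewrite ?out_legL ?out_legR /=;
  have /andP [/eqP hL /eqP hR] := bht i; rewrite -?hL -?hR; congr (_ && h (i, _)); exact: val_inj.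
Qed.

Lemma peps_state_shift t :
  \sum_(w : {ffun Site -> bool}) \sum_(h : {ffun 'I_n * 'I_d.+1 -> bool} | boundary h t)
  \sum_(s : {ffun Site -> bool})
    \prod_(x : Site) tensor_vec A (site_config (xorf s ds) (xorf w dw) (xorf h (hshift g.1)) x) =
  peps_state A n d (xorb_bits t (restr out_leg g).1).
Proof.
rewrite peps_stateE [RHS](reindex_inj (@xorf_inj _ dw)); apply: eq_bigr => w _.
rewrite [RHS](reindex_inj (@xorf_inj _ (hshift g.1))) /=.
rewrite [RHS](eq_bigl (boundary^~ t)) => [|h]; last exact: boundary_shift.
apply: eq_bigr => h _; rewrite [RHS](reindex_inj (@xorf_inj _ ds)).
by apply: eq_bigr.
Qed.

(* Inside the tensor network sum, the local stabilizers shift the summation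
   variables bijectively, and since g commutes with the contraction group the
   product of their signs is the sign of the restriction of g. *)
Lemma restr_out_stab : restr out_leg g \in stab_group (peps_state A n d).
Proof.
have local x : exists k : nat, forall y,
    'i ^+ k * pauli_act (site_pauli g x) (tensor_vec A) y = tensor_vec A y.
  by apply/stab_groupP; move: g_loc; rewrite inE => /forallP.
have [k Hk] := fin_all_exists local.
apply/stab_groupP; exists (\sum_x k x)%N => t.
rewrite pauli_actE -peps_state_shift [RHS]peps_stateE mulrA !mulr_sumr.
apply: eq_bigr => w _; rewrite mulr_sumr; apply: eq_bigr => h bht; rewrite mulr_sumr.
apply: eq_bigr => s _; symmetry.
under [LHS]eq_bigr => x _ do rewrite -(Hk x) pauli_actE site_config_shift.
rewrite !big_split /= prodrXr -(big_morph signb signbD (erefl (signb false))).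
by rewrite (@dotb_site_config _ _ _ (xorb_bits t (restr out_leg g).1)) ?boundary_shift ?mulrA.
Qed.

End Contraction.

Lemma peps_stab_coisotropic : perp (S_AND A n d) \subset S_AND A n d.
Proof.
set T := restr out_leg @: (local_stab :&: perp contraction).
have TS : T \subset S_AND A n d.
  by apply/subsetP => _ /imsetP [g /setIP [g_loc g_perp] ->]; apply: restr_out_stab.
have coT : perp T \subset T.
  rewrite /T -(restr_sumset_null (local_stab :&: perp contraction)
                                 contraction_subspace restr_contraction).
  apply: (perp_restr out_leg_inj).
    exact/sumset_subspace/contraction_subspace/subspace_setI/perp_subspace/local_stab_subspace.
  apply: coisotropic_reduction contraction_subspace contraction_isotropic.
    exact: local_stab_subspace.
  by rewrite perp_local_stab.
exact: subset_trans (perpS TS) (subset_trans coT TS).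
Qed.

End Peps.

Theorem corollary1 (A : tensor) (n d : nat) :
  is_stabilizer_tensor A -> (1 <= n)%N -> (1 <= d)%N ->
  forall x : pauli n,
    x \in S_L A n d <-> (forall z, z \in Z_L A n d -> pcommute x z).
Proof.
move=> stabA; case: n => // n _; case: d => // d _ x.
apply: mem_coisotropic.
  exact/restr_subspace/stab_group_subspace.
exact (perp_restr (@lshift_inj _ _) (stab_group_subspace _) (peps_stab_coisotropic n d stabA)).
Qed.
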